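(* For each $n\in\omega$ let $X_n$ be a path connected metrizable space. Then $\mathfrak{h}(\prod_{n\in\omega} X_n) \simeq \prod_{n\in\omega}\mathfrak{h}(X_n)$, where $\prod_n X_n$ carries the product topology.
   Context: For a path connected metric space $(X,d)$ and $x\in X$, $L_x$ is the set of loops at $x$ with metric $\sup_{s\in[0,1]} d(l_0(s),l_1(s))$. A subgroup $G\le\pi_1(X,x)$ is closed if the set $\bigcup G\subseteq L_x$ of loops whose homotopy class lies in $G$ is closed in $L_x$; for $G\le \pi_1(X,x)$, $\overline{G}$ is the smallest closed subgroup containing $G$. For a path connected metrizable space $X$, the strong abelianization is $\mathfrak{h}(X) = \pi_1(X)/\overline{[\pi_1(X),\pi_1(X)]}$. *)

From HB Require Import structures.
From mathcomp Require Import all_boot all_order all_algebra.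
From mathcomp Require Import all_classical all_reals all_analysis.
From mathcomp Require Import Rstruct Rstruct_topology.
Set Implicit Arguments. Unset Strict Implicit. Unset Printing Implicit Defensive.
Import Order.TTheory GRing.Theory Num.Theory.
Local Open Scope classical_set_scope.
Local Open Scope ring_scope.

Notation R := Rdefinitions.R.

Definition I01 : set R := `[0%R, 1%R].

Definition is_metric (X : Type) (d : X -> X -> R) : Prop :=
  [/\ forall x y, 0 <= d x y,
      forall x y, d x y = 0 <-> x = y,
      forall x y, d x y = d y x &
      forall x y z, d x z <= d x y + d y z].

Definition metrizes (X : topologicalType) (d : X -> X -> R) : Prop :=
  is_metric d /\
  forall A : set X, open A <->
    (forall x, A x -> exists2 e : R, 0 < e & [set y | d x y < e] `<=` A).

Definition metrizable (X : topologicalType) : Prop := exists d, @metrizes X d.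

(** Paths are maps R -> X continuous on [0,1]; only values on [0,1] matter. *)
Definition is_path (X : topologicalType) (f : R -> X) : Prop :=
  {within I01, continuous f}.

Definition path_connected (X : topologicalType) : Prop :=
  forall x y : X, exists f : R -> X, [/\ is_path f, f 0 = x & f 1 = y].

Definition is_loop (X : topologicalType) (x : X) (l : R -> X) : Prop :=
  [/\ is_path l, l 0 = x & l 1 = x].

Definition path_homotopic (X : topologicalType) (l0 l1 : R -> X) : Prop :=
  exists H : R * R -> X,
    [/\ {within I01 `*` I01, continuous H},
        (forall s, I01 s -> H (s, 0) = l0 s /\ H (s, 1) = l1 s) &
        (forall t, I01 t -> H (0, t) = l0 0 /\ H (1, t) = l0 1)].

Definition concat (X : Type) (l0 l1 : R -> X) : R -> X :=
  fun s => if s <= 2^-1 then l0 (2 * s) else l1 (2 * s - 1).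

Definition reverse (X : Type) (l : R -> X) : R -> X := fun s => l (1 - s).

Definition commutator (X : Type) (a b : R -> X) : R -> X :=
  concat (concat (concat a b) (reverse a)) (reverse b).

Definition loop_dist (X : Type) (d : X -> X -> R) (l0 l1 : R -> X) : R :=
  sup [set d (l0 s) (l1 s) | s in I01].

(** A subgroup G of pi_1(X,x) is represented by the set of loops
    \bigcup G (loops whose homotopy class lies in G). *)
Definition loop_subgroup (X : topologicalType) (x : X) (S : set (R -> X)) : Prop :=
  [/\ S `<=` is_loop x,
      forall l l', S l -> is_loop x l' -> path_homotopic l l' -> S l',
      S (cst x),
      forall l l', S l -> S l' -> S (concat l l') &
      forall l, S l -> S (reverse l)].

(** \bigcup G is closed in L_x with the sup metric. *)
Definition loop_closed (X : topologicalType) (d : X -> X -> R) (x : X)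
    (S : set (R -> X)) : Prop :=
  forall l, is_loop x l -> ~ S l ->
    exists2 e : R, 0 < e &
      forall l', is_loop x l' -> loop_dist d l l' < e -> ~ S l'.

(** \bigcup [pi_1, pi_1]: the smallest subgroup containing all commutators. *)
Definition commutator_loops (X : topologicalType) (x : X) : set (R -> X) :=
  fun l => forall S, loop_subgroup x S ->
    (forall a b, is_loop x a -> is_loop x b -> S (commutator a b)) -> S l.

(** \bigcup of the closure of [pi_1, pi_1]: the smallest closed subgroup
    containing the commutator subgroup. *)
Definition closed_commutator_loops (X : topologicalType) (d : X -> X -> R)
    (x : X) : set (R -> X) :=
  fun l => forall S, loop_subgroup x S -> loop_closed d x S ->
    commutator_loops x `<=` S -> S l.

(** The strong abelianization h(X) = pi_1(X,x) / closure([pi_1,pi_1]),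
    presented as the set of loops at x modulo the relation
    l ~ l'  iff  [l][l']^-1 lies in the closed commutator subgroup,
    with multiplication induced by concatenation. *)
Definition h_eq (X : topologicalType) (d : X -> X -> R) (x : X)
    (l l' : R -> X) : Prop :=
  closed_commutator_loops d x (concat l (reverse l')).

(** An isomorphism h(prod_n X_n) ~= prod_n h(X_n) (the latter being the direct
    product of groups, with componentwise operation and equality), given
    as a map on representatives which is well defined and injective
    (h_eq-preserving and reflecting), a homomorphism, and surjective. *)
Definition h_prod_iso (X : nat -> topologicalType) (d : forall n, X n -> X n -> R)
    (x : forall n, X n) (D : prod_topology X -> prod_topology X -> R) : Prop :=
  exists f : (R -> prod_topology X) -> (forall n, R -> X n),
    [/\ forall l, is_loop (x : prod_topology X) l -> forall n, is_loop (x n) (f l n),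
        forall l l', is_loop (x : prod_topology X) l -> is_loop (x : prod_topology X) l' ->
          (h_eq D x l l' <-> forall n, h_eq (d n) (x n) (f l n) (f l' n)),
        forall l l', is_loop (x : prod_topology X) l -> is_loop (x : prod_topology X) l' ->
          forall n, h_eq (d n) (x n) (f (concat l l') n) (concat (f l n) (f l' n)) &
        forall g : forall n, R -> X n, (forall n, is_loop (x n) (g n)) ->
          exists2 l, is_loop (x : prod_topology X) l &
            forall n, h_eq (d n) (x n) (f l n) (g n)].

(* The isomorphism is induced by the coordinate projections; surjectivity and
   the homomorphism property hold on the nose.  Composing loops with a
   continuous pointed map sends the closed commutator subgroup into the closed
   commutator subgroup, because the preimage of a closed subgroup containing
   all commutators is again such a subgroup (closedness comes from uniform
   continuity along a compact loop).  Applied to the projections this gives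
   well-definedness.  Conversely, let every coordinate of a loop m lie in the
   closed commutator subgroup of its factor, and let S be a closed subgroup of
   the product containing all commutators.  Applied to the coordinate
   inclusions, the same fact puts each coordinate loop of m, included in the
   product, into S.  The truncation of m to its first N coordinates is
   homotopic to the product of the first N of these loops, so it lies in S;
   the truncations converge uniformly to m, hence m lies in S. *)

From mathcomp Require Import all_boot all_order all_algebra.
From mathcomp Require Import all_classical all_reals all_analysis.
From mathcomp Require Import Rstruct Rstruct_topology.
From mathcomp Require Import ring lra.
Set Implicit Arguments. Unset Strict Implicit. Unset Printing Implicit Defensive.
Import Order.TTheory GRing.Theory Num.Theory.
Local Open Scope classical_set_scope.
Local Open Scope ring_scope.

Lemma I01E s : I01 s = (0 <= s <= 1).
Proof. by rewrite /I01 /= in_itv. Qed.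

Lemma cvg_prod_topology (I : Type) (X : I -> topologicalType) (T : Type)
    (F : set_system T) (g : T -> prod_topology X) (p : prod_topology X) :
  Filter F -> (forall i, (fun t => g t i) @ F --> p i) -> g @ F --> p.
Proof.
move=> FF gp; suff : g @ F --> (p : product_topology_def X) by [].
apply/cvg_sup => i A /=.
rewrite (@nbhsE (initial_topology (fun f : prod_topology X => f i))).
move=> [B [[C oC <-] Cp] BA].
have := gp i C; rewrite nbhs_simpl /= => /(_ (open_nbhs_nbhs (conj oC Cp))).
by apply: filterS => t /= Ct; apply: BA.
Qed.

Lemma within_continuous_prod (I : Type) (X : I -> topologicalType)
    (T : topologicalType) (A : set T) (f : T -> prod_topology X) :
  (forall i, {within A, continuous (fun t => f t i)}) -> {within A, continuous f}.
Proof.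
move=> fi; apply/subspace_continuousP => z Az; apply: cvg_prod_topology => i.
by have /subspace_continuousP := fi i; apply.
Qed.

Lemma within_continuous_comp (T Y Z : topologicalType) (A : set T)
    (f : T -> Y) (h : Y -> Z) :
  continuous h -> {within A, continuous f} -> {within A, continuous (h \o f)}.
Proof.
move=> ch /subspace_continuousP cf; apply/subspace_continuousP => z Az.
exact: cvg_comp (cf z Az) (ch (f z)).
Qed.

Lemma within_continuous_path_comp (T Y : topologicalType) (A : set T)
    (g : T -> R) (p : R -> Y) :
  continuous g -> (forall z, A z -> I01 (g z)) -> is_path p ->
  {within A, continuous (p \o g)}.
Proof.
move=> cg gA /subspace_continuousP cp; apply/subspace_continuousP => z Az.
apply: cvg_comp (cp _ (gA z Az)) => U /=; rewrite /within /= nbhs_simpl /=.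
by move=> /(cg z); rewrite nbhs_simpl /=; apply: filterS => w Uw Aw; apply/Uw/gA.
Qed.

Lemma near_covering_I01 (I : Type) (F : set_system I) (P : I -> R -> Prop) :
  Filter F ->
  (forall s, I01 s -> exists2 U, nbhs s U &
     exists2 V, F V & forall s' i, U s' -> V i -> I01 s' -> P i s') ->
  F (fun i => forall s, I01 s -> P i s).
Proof.
move=> FF loc.
have := (near_covering_withinP I01).2 ((compact_near_coveringP I01).1 (@segment_compact _ 0 1)).
apply=> // s Is; have [U nU [V FV UV]] := loc s Is.
by exists (U, V) => //= -[s' i] /= [Us' Vi]; exact: UV.
Qed.

Lemma continuous_affine (a b : R) : continuous (fun s : R => a * s + b).
Proof.
move=> s; apply: (@continuousD R R^o); last exact: cvg_cst.
by apply: (@continuousM R R^o); [exact: cvg_cst|exact: cvg_id].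
Qed.

Lemma continuous_convex_mix (phi0 phi1 : R -> R) :
  continuous phi0 -> continuous phi1 ->
  continuous (fun p : R * R => (1 - p.2) * phi0 p.1 + p.2 * phi1 p.1).
Proof.
move=> c0 c1 p.
apply: (@continuousD R R^o (R * R)%type (fun p => (1 - p.2) * phi0 p.1) (fun p => p.2 * phi1 p.1)).
- apply: (@continuousM R (R * R)%type (fun p => 1 - p.2) (fun p => phi0 p.1)).
    by apply: (@continuousB R R^o (R * R)%type (fun=> 1) snd); [exact: cvg_cst|exact: cvg_snd].
  exact: continuous_comp cvg_fst (c0 _).
- apply: (@continuousM R (R * R)%type snd (fun p => phi1 p.1)); first exact: cvg_snd.
  exact: continuous_comp cvg_fst (c1 _).
Qed.

Definition ramp_left (s : R) : R := Num.min (2 * s) 1.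
Definition ramp_right (s : R) : R := Num.max (2 * s - 1) 0.
Definition tent (s : R) : R := Num.min (2 * s) (2 - 2 * s).

Lemma continuous_ramp_left : continuous ramp_left.
Proof. by move=> s; apply: continuous_min; [exact: mulrl_continuous|exact: cvg_cst]. Qed.

Lemma continuous_ramp_right : continuous ramp_right.
Proof.
move=> s; apply: (@continuous_max R R (fun s => 2 * s - 1) (fun=> 0)); last exact: cvg_cst.
exact: continuous_affine.
Qed.

Lemma continuous_tent : continuous tent.
Proof.
move=> s; apply: continuous_min; first exact: mulrl_continuous.
by apply: (@continuousB R R^o R (fun=> 2) ( *%R 2)); [exact: cvg_cst|exact: mulrl_continuous].
Qed.

Section Paths.
Variable Y : topologicalType.
Implicit Types (y : Y) (p q k : R -> Y).

Lemma path_cst y : is_path (cst y).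
Proof. exact/continuous_subspaceT/cst_continuous. Qed.

Lemma path_concat p q : is_path p -> is_path q -> p 1 = q 0 -> is_path (concat p q).
Proof.
move=> cp cq pq; rewrite /is_path.
have -> : I01 = [set` `[0, 2^-1]] `|` [set` `[2^-1, 1]].
  apply/seteqP; split => s /=; rewrite I01E ?in_itv /=.
    move=> /andP[? ?]; have [?|?] : s <= 2^-1 \/ 2^-1 <= s by lra.
      by left; apply/andP; split; lra.
    by right; apply/andP; split; lra.
  by case=> /andP[? ?]; apply/andP; split; lra.
apply: withinU_continuous; [exact: interval_closed|exact: interval_closed| |].
- apply: (@subspace_eq_continuous _ _ _ (p \o ( *%R 2))).
    move=> s; rewrite inE /= in_itv /= => /andP[_ hs].
    by rewrite /from_subspace /concat; case: ifPn => // /negP[].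
  apply: within_continuous_path_comp => //; first exact: mulrl_continuous.
  by move=> s; rewrite /= I01E in_itv /= => /andP[? ?]; apply/andP; split; lra.
- apply: (@subspace_eq_continuous _ _ _ (q \o (fun s => 2 * s - 1))).
    move=> s; rewrite inE /= in_itv /= => /andP[hs _].
    rewrite /from_subspace /concat /=; case: ifPn => // hs2.
    have -> : s = 2^-1 by apply/eqP; rewrite eq_le hs2 hs.
    have -> : (2 : R) / 2 = 1 by lra.
    by rewrite subrr pq.
  apply: (@within_continuous_path_comp R Y [set` `[2^-1, 1]] (fun s => 2 * s - 1) q) => //.
    exact: continuous_affine.
  by move=> s; rewrite /= I01E in_itv /= => /andP[? ?]; apply/andP; split; lra.
Qed.

Lemma path_reverse p : is_path p -> is_path (reverse p).
Proof.
move=> cp; apply: (@within_continuous_path_comp R Y I01 (fun s => 1 - s) p) => //.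
  by move=> s; apply: (@continuousB R R^o R (fun=> 1) id); [exact: cvg_cst|exact: cvg_id].
by move=> s; rewrite !I01E => /andP[? ?]; apply/andP; split; lra.
Qed.

Lemma path_homotopic_reparam k (phi0 phi1 : R -> R) :
  is_path k -> continuous phi0 -> continuous phi1 ->
  (forall s, I01 s -> I01 (phi0 s)) -> (forall s, I01 s -> I01 (phi1 s)) ->
  phi0 0 = phi1 0 -> phi0 1 = phi1 1 ->
  path_homotopic (k \o phi0) (k \o phi1).
Proof.
move=> hk c0 c1 I0 I1 e0 e1.
exists (k \o (fun p : R * R => (1 - p.2) * phi0 p.1 + p.2 * phi1 p.1)); split.
- apply: within_continuous_path_comp => //; first exact: continuous_convex_mix.
  move=> [s t] [/= Is]; have := I0 s Is; have := I1 s Is; rewrite !I01E.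
  by move=> /andP[? ?] /andP[? ?] /andP[? ?]; apply/andP; split; nra.
- by move=> s _; split; congr k => /=; ring.
- by move=> t _; rewrite /= -e0 -e1; split; congr k; ring.
Qed.

Lemma concat_reverseE k : concat k (reverse k) = k \o tent.
Proof.
apply: funext => s; rewrite /concat /reverse /tent /=; case: ifPn => hs.
  by rewrite min_l //; lra.
by rewrite min_r; [congr k; lra | rewrite -ltNge in hs; lra].
Qed.

Lemma concat_cstlE y k : k 0 = y -> concat (cst y) k = k \o ramp_right.
Proof.
move=> k0; apply: funext => s; rewrite /concat /ramp_right /=; case: ifPn => hs.
  by rewrite max_r ?k0 //; lra.
by rewrite max_l //; rewrite -ltNge in hs; lra.
Qed.

Lemma concat_cstrE y k : k 1 = y -> concat k (cst y) = k \o ramp_left.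
Proof.
move=> k1; apply: funext => s; rewrite /concat /ramp_left /=; case: ifPn => hs.
  by rewrite min_l //; lra.
by rewrite min_r ?k1 //; rewrite -ltNge in hs; lra.
Qed.

Lemma homotopic_concat_cstl y k : is_path k -> k 0 = y ->
  path_homotopic (concat (cst y) k) k.
Proof.
move=> hk k0; rewrite (concat_cstlE k0) -[X in path_homotopic _ X]/(k \o id).
apply: path_homotopic_reparam => //; rewrite /ramp_right.
- exact: continuous_ramp_right.
- by move=> s; exact: cvg_id.
- move=> s; rewrite !I01E => /andP[? ?].
  by rewrite le_max ge_max lexx ler01 orbT andbT /=; lra.
- by rewrite max_r //; lra.
- by rewrite max_l //; lra.
Qed.

Lemma homotopic_concat_cstr y k : is_path k -> k 1 = y ->
  path_homotopic (concat k (cst y)) k.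
Proof.
move=> hk k1; rewrite (concat_cstrE k1) -[X in path_homotopic _ X]/(k \o id).
apply: path_homotopic_reparam => //; rewrite /ramp_left.
- exact: continuous_ramp_left.
- by move=> s; exact: cvg_id.
- move=> s; rewrite !I01E => /andP[? ?].
  by rewrite le_min ge_min lexx ler01 orbT andbT /=; lra.
- by rewrite min_l //; lra.
- by rewrite min_r //; lra.
Qed.

Lemma homotopic_cst_concat_reverse k : is_path k ->
  path_homotopic (cst (k 0)) (concat k (reverse k)).
Proof.
move=> hk; rewrite concat_reverseE -[X in path_homotopic X _]/(k \o cst 0).
apply: path_homotopic_reparam => //; rewrite /tent.
- by move=> s; exact: cvg_cst.
- exact: continuous_tent.
- by move=> s _; rewrite I01E lexx ler01.
- move=> s; rewrite !I01E => /andP[? ?]; rewrite le_min ge_min.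
  by apply/andP; split; [apply/andP; split|apply/orP; case: (lerP s 2^-1) => ?; [left|right]]; lra.
- by rewrite /= min_l; lra.
- by rewrite /= min_r; lra.
Qed.
End Paths.

Section Loops.
Variables (Y : topologicalType) (y : Y).
Implicit Types (p q a b k : R -> Y).

Lemma loop_cst : is_loop y (cst y).
Proof. by split => //; exact: path_cst. Qed.

Lemma loop_concat p q : is_loop y p -> is_loop y q -> is_loop y (concat p q).
Proof.
move=> [hp p0 p1] [hq q0 q1]; split.
- by apply: path_concat => //; rewrite p1 q0.
- by rewrite /concat ifT ?mulr0 //; lra.
- rewrite /concat ifF; last by apply/negbTE; rewrite -ltNge; lra.
  by have -> : (2 : R) * 1 - 1 = 1 by lra.
Qed.

Lemma loop_reverse p : is_loop y p -> is_loop y (reverse p).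
Proof. by move=> [hp p0 p1]; split; rewrite /reverse ?subr0 ?subrr //; exact: path_reverse. Qed.

Lemma loop_commutator a b : is_loop y a -> is_loop y b -> is_loop y (commutator a b).
Proof.
move=> ha hb; apply: loop_concat; last exact: loop_reverse.
by apply: loop_concat; [exact: loop_concat|exact: loop_reverse].
Qed.

Lemma commutator_loops_commutator a b :
  is_loop y a -> is_loop y b -> commutator_loops y (commutator a b).
Proof. by move=> ha hb S _; apply. Qed.

Lemma closed_commutator_loops_concat_reverse (d : Y -> Y -> R) k :
  is_loop y k -> closed_commutator_loops d y (concat k (reverse k)).
Proof.
move=> hk S [_ hom Scst _ _] _ _; apply: (hom (cst y)) => //.
  by apply: loop_concat => //; exact: loop_reverse.
by case: hk => pk <- _; exact: homotopic_cst_concat_reverse.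
Qed.

End Loops.

Section Metric.
Variables (Y : topologicalType) (d : Y -> Y -> R).
Hypothesis hd : metrizes d.

Lemma metricC a b : d a b = d b a.
Proof. by case: hd => -[]. Qed.

Lemma metric_triangle a b c : d a c <= d a b + d b c.
Proof. by case: hd => -[]. Qed.

Lemma metric_xx a : d a a = 0.
Proof. by case: hd => -[_ h _ _] _; apply/h. Qed.

Lemma nbhs_metric_ball a e : 0 < e -> nbhs a [set b | d a b < e].
Proof.
move=> e0; apply: open_nbhs_nbhs; split; last by rewrite /= metric_xx.
apply/(hd.2 _).2 => b /= ab; exists (e - d a b); first by rewrite subr_gt0.
by move=> c /= bc; have := metric_triangle a b c; lra.
Qed.

Lemma nbhs_ex_metric_ball a U : nbhs a U -> exists2 e, 0 < e & [set b | d a b < e] `<=` U.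
Proof.
rewrite nbhsE => -[B [oB Ba] BU]; have [e e0 eB] := (hd.2 B).1 oB a Ba.
by exists e => // b /eB; apply: BU.
Qed.

Lemma path_near k s e : is_path k -> I01 s -> 0 < e ->
  nbhs s (fun s' => I01 s' -> d (k s) (k s') < e).
Proof.
move=> /subspace_continuousP hk Is e0.
exact: (hk s Is _ (nbhs_metric_ball (k s) e0)).
Qed.

Lemma paths_metric_bounded f g : is_path f -> is_path g ->
  exists M, forall s, I01 s -> d (f s) (g s) <= M.
Proof.
move=> hf hg.
have : (pinfty_nbhs R) (fun M => forall s, I01 s -> d (f s) (g s) < M).
  apply: near_covering_I01 => s Is.
  exists (fun s' => I01 s' -> d (f s) (f s') < 1 /\ d (g s) (g s') < 1).
    apply: filterS (filterI (path_near hf Is ltr01) (path_near hg Is ltr01)).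
    by move=> s' [fs gs] Is'; split; [apply: fs|apply: gs].
  exists (fun M => d (f s) (g s) + 2 < M); first exact: nbhs_pinfty_gt (num_real _).
  move=> s' M /(_ _) fgs' M_gt Is'; have [fs gs] := fgs' Is'.
  have := metric_triangle (f s') (f s) (g s'); have := metric_triangle (f s) (g s) (g s').
  by rewrite (metricC (f s') (f s)); lra.
by move=> /filter_ex [M fgM]; exists M => s Is; exact/ltW/fgM.
Qed.

Lemma le_loop_dist f g s : is_path f -> is_path g -> I01 s ->
  d (f s) (g s) <= loop_dist d f g.
Proof.
move=> hf hg Is; have [M fgM] := paths_metric_bounded hf hg.
apply: sup_upper_bound; last by exists s.
split; first by exists (d (f s) (g s)), s.
by exists M => _ [t It <-]; apply: fgM.
Qed.

End Metric.

Lemma loop_dist_le (Y : Type) (d : Y -> Y -> R) (f g : R -> Y) c :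
  (forall s, I01 s -> d (f s) (g s) <= c) -> loop_dist d f g <= c.
Proof.
move=> fgc; apply: ge_sup; first by exists (d (f 0) (g 0)), 0 => //; rewrite I01E lexx ler01.
by move=> _ [s Is <-]; apply: fgc.
Qed.

Lemma loop_closed_approx (Y : topologicalType) (d : Y -> Y -> R) (y : Y)
    (S : set (R -> Y)) l :
  loop_closed d y S -> is_loop y l ->
  (forall e, 0 < e -> exists2 l', is_loop y l' /\ S l' & loop_dist d l l' < e) -> S l.
Proof.
move=> cS hl approx; have [//|nSl] := pselect (S l).
have [e e0 he] := cS l hl nSl; have [l' [hl' Sl'] ll'] := approx e e0.
by have := he l' hl' ll'.
Qed.

Section CompLoops.
Variables (Y Z : Type) (h : Y -> Z).

Lemma comp_concat (p q : R -> Y) : h \o concat p q = concat (h \o p) (h \o q).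
Proof. by apply: funext => s; rewrite /concat /=; case: ifP. Qed.

Lemma comp_commutator (a b : R -> Y) :
  h \o commutator a b = commutator (h \o a) (h \o b).
Proof. by rewrite /commutator !comp_concat. Qed.

End CompLoops.

Section Pushforward.
Variables (Y Z : topologicalType) (h : Y -> Z).
Hypothesis hcont : continuous h.
Variables (dY : Y -> Y -> R) (dZ : Z -> Z -> R).
Hypotheses (hdY : metrizes dY) (hdZ : metrizes dZ).

Lemma path_uniform_continuity (k : R -> Y) e : is_path k -> 0 < e ->
  exists2 r, 0 < r &
    forall s, I01 s -> forall b, dY (k s) b < r -> dZ (h (k s)) (h b) < e.
Proof.
move=> hk e0.
have : (0:R)^'+ (fun r => forall s, I01 s -> forall b, dY (k s) b < r ->
                             dZ (h (k s)) (h b) < e).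
  apply: near_covering_I01 => s Is.
  have e2 : 0 < e / 2 by lra.
  have /hcont := nbhs_metric_ball hdZ (h (k s)) e2.
  move=> /(nbhs_ex_metric_ball hdY) [r r0 hr].
  exists (fun s' => I01 s' -> dY (k s) (k s') < r / 2); first by apply: (path_near hdY) => //; lra.
  exists (fun r' => r' < r / 2); first by apply: nbhs_right_lt; lra.
  move=> s' r' ks' r'r Is' b ks'b; have := ks' Is' => {}ks'.
  have hs' : dZ (h (k s)) (h (k s')) < e / 2 by apply: (hr (k s')) => /=; lra.
  have hb : dZ (h (k s)) (h b) < e / 2.
    by apply: (hr b) => /=; have := metric_triangle hdY (k s) (k s') b; lra.
  have := metric_triangle hdZ (h (k s')) (h (k s)) (h b).
  by rewrite (metricC hdZ (h (k s')) (h (k s))); lra.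
by move=> /(filterI (nbhs_right_gt 0))/filter_ex [r [r0 hr]]; exists r.
Qed.

Lemma loop_dist_comp_lt (l : R -> Y) e : is_path l -> 0 < e ->
  exists2 r, 0 < r & forall l', is_path l' ->
    loop_dist dY l l' < r -> loop_dist dZ (h \o l) (h \o l') < e.
Proof.
move=> hl e0; have e20 : 0 < e / 2 by lra.
have [r r0 hr] := path_uniform_continuity hl e20.
exists r => // l' hl' ll'; suff : loop_dist dZ (h \o l) (h \o l') <= e / 2 by lra.
apply: loop_dist_le => s Is; apply/ltW/hr => //.
by have := le_loop_dist hdY hl hl' Is; lra.
Qed.

Variables (y : Y) (z : Z).
Hypothesis hyz : h y = z.

Lemma loop_comp l : is_loop y l -> is_loop z (h \o l).
Proof.
by move=> [hl l0 l1]; split; rewrite /= ?l0 ?l1 //; exact: within_continuous_comp.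
Qed.

Lemma homotopic_comp l l' : path_homotopic l l' -> path_homotopic (h \o l) (h \o l').
Proof.
move=> [H [cH H1 H2]]; exists (h \o H); split.
- exact: within_continuous_comp.
- by move=> s Is; have [/= -> ->] := H1 s Is.
- by move=> t It; have [/= -> ->] := H2 t It.
Qed.

Definition loop_preimage (S : set (R -> Z)) : set (R -> Y) :=
  fun l => is_loop y l /\ S (h \o l).

Lemma loop_subgroup_preimage S : loop_subgroup z S -> loop_subgroup y (loop_preimage S).
Proof.
move=> [_ hom Scst Sconcat Srev]; split.
- by move=> l [].
- move=> l l' [hl Sl] hl' ll'; split => //.
  by apply: (hom (h \o l)) => //; [exact: loop_comp|exact: homotopic_comp].
- by split; [exact: loop_cst|move: Scst; rewrite -hyz].
- move=> l l' [hl Sl] [hl' Sl']; split; first exact: loop_concat.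
  by rewrite comp_concat; apply: Sconcat.
- by move=> l [hl Sl]; split; [exact: loop_reverse|exact: (Srev _ Sl)].
Qed.

Lemma loop_closed_preimage S : loop_closed dZ z S -> loop_closed dY y (loop_preimage S).
Proof.
move=> cS l hl nSl.
have [e e0 he] := cS _ (loop_comp hl) (fun Sl => nSl (conj hl Sl)).
have [r r0 hr] := loop_dist_comp_lt (let: And3 pl _ _ := hl in pl) e0.
exists r => // l' hl' ll' [_ Sl']; apply: (he (h \o l')) => //; first exact: loop_comp.
by apply: hr => //; case: hl'.
Qed.

Lemma closed_commutator_loops_comp l :
  closed_commutator_loops dY y l -> closed_commutator_loops dZ z (h \o l).
Proof.
move=> ccl S sS cS comS.
suff : loop_preimage S l by case.
apply: ccl; [exact: loop_subgroup_preimage|exact: loop_closed_preimage|].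
move=> m; apply; first exact: loop_subgroup_preimage.
move=> a b ha hb; split; first exact: loop_commutator.
rewrite comp_commutator; apply: comS.
by apply: commutator_loops_commutator; exact: loop_comp.
Qed.

End Pushforward.

Lemma proj_continuous_prod (I : eqType) (X : I -> topologicalType) i :
  continuous (proj i : prod_topology X -> X i).
Proof. exact: proj_continuous. Qed.

Lemma path_proj (I : eqType) (X : I -> topologicalType) (l : R -> prod_topology X) i :
  is_path l -> is_path (proj i \o l).
Proof. by move=> hl; have := within_continuous_comp (proj_continuous_prod (i := i)) hl. Qed.

Lemma loop_proj (I : eqType) (X : I -> topologicalType) (x : prod_topology X) l i :
  is_loop x l -> is_loop (x i) (proj i \o l).
Proof. by move=> hl; have := loop_comp (proj_continuous_prod (i := i)) (erefl (x i)) hl. Qed.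

Lemma dfwith_continuous_prod (I : eqType) (X : I -> topologicalType)
    (g : prod_topology X) i :
  continuous (dfwith g i : X i -> prod_topology X).
Proof. exact: dfwith_continuous. Qed.

Lemma homotopic_prod (I : Type) (X : I -> topologicalType) (l l' : R -> prod_topology X) :
  (forall i, path_homotopic (proj i \o l) (proj i \o l')) -> path_homotopic l l'.
Proof.
move=> hom; pose H i := projT1 (cid (hom i)).
have hH i : [/\ {within I01 `*` I01, continuous H i},
    (forall s, I01 s -> H i (s, 0) = l s i /\ H i (s, 1) = l' s i) &
    (forall t, I01 t -> H i (0, t) = l 0 i /\ H i (1, t) = l 1 i)].
  exact: projT2 (cid (hom i)).
exists (fun p i => H i p); split.
- by apply: within_continuous_prod => i; case: (hH i).
- move=> s Is; split; apply: functional_extensionality_dep => i.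
    by case: (hH i) => _ /(_ s Is) [].
  by case: (hH i) => _ /(_ s Is) [].
- move=> t It; split; apply: functional_extensionality_dep => i.
    by case: (hH i) => _ _ /(_ t It) [].
  by case: (hH i) => _ _ /(_ t It) [].
Qed.

Section Product.
Variables (X : nat -> topologicalType) (x : prod_topology X).
Local Notation P := (prod_topology X).

Definition trunc (N : nat) (p : P) : P := fun i => if (i < N)%N then p i else x i.

Lemma trunc_cvg (p : P) :
  (fun pN : P * nat => trunc pN.2 pN.1) @ filter_prod (nbhs p) \oo --> p.
Proof.
apply: cvg_prod_topology => i U /= nU.
have := @proj_continuous nat X i p U nU; rewrite nbhs_simpl /= => nU'.
exists (proj i @^-1` U, [set N | (i < N)%N]) => /=; first by split => //; exists i.+1.
by move=> [q N] /= [Uq iN]; rewrite /trunc iN.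
Qed.

Lemma path_trunc N l : is_path l -> is_path (trunc N \o l).
Proof.
move=> hl; apply: within_continuous_prod => i; rewrite /trunc /=; case: (i < N)%N.
  exact: path_proj.
exact/continuous_subspaceT/cst_continuous.
Qed.

Lemma loop_trunc N l : is_loop x l -> is_loop x (trunc N \o l).
Proof.
move=> [hl l0 l1]; split; first exact: path_trunc.
  by apply: functional_extensionality_dep => i; rewrite /= /trunc l0; case: ifP.
by apply: functional_extensionality_dep => i; rewrite /= /trunc l1; case: ifP.
Qed.

Lemma homotopic_trunc_succ N m : is_loop x m ->
  path_homotopic (concat (trunc N \o m) (dfwith x N \o (proj N \o m))) (trunc N.+1 \o m).
Proof.
(* Coordinatewise this is a unit law: [m_i * 1 ~ m_i] for [i < N], [1 * q ~ q] otherwise. *)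
move=> [hm m0 m1]; apply: homotopic_prod => i; rewrite comp_concat.
case: (ltnP i N) => iN.
- have -> : proj i \o (trunc N \o m) = proj i \o m.
    by apply: funext => s; rewrite /= /proj /trunc iN.
  have -> : proj i \o (dfwith x N \o (proj N \o m)) = cst (x i).
    by apply: funext => s; rewrite /= /proj dfwithout // neq_ltn iN orbT.
  have -> : proj i \o (trunc N.+1 \o m) = proj i \o m.
    by apply: funext => s; rewrite /= /proj /trunc ltnS ltnW.
  apply: homotopic_concat_cstr; first exact: path_proj.
  by rewrite /= /proj m1.
- have -> : proj i \o (trunc N \o m) = cst (x i).
    by apply: funext => s; rewrite /= /proj /trunc ltnNge iN.
  have -> : proj i \o (dfwith x N \o (proj N \o m)) = proj i \o (trunc N.+1 \o m).
    apply: funext => s; rewrite /= /proj /trunc ltnS.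
    have [<-|Ni] := eqVneq N i; first by rewrite dfwithin leqnn.
    by rewrite dfwithout // leqNgt ltn_neqAle Ni iN.
  apply: homotopic_concat_cstl; first exact/path_proj/path_trunc.
  by rewrite /= m0 /proj /trunc; case: ifP.
Qed.

Variables (D : P -> P -> R) (hD : metrizes D).

Lemma trunc_approx l e : is_path l -> 0 < e ->
  exists N, forall s, I01 s -> D (l s) (trunc N (l s)) < e.
Proof.
move=> hl e0.
have : \oo (fun N => forall s, I01 s -> D (l s) (trunc N (l s)) < e).
  apply: near_covering_I01 => s Is.
  have e2 : 0 < e / 2 by lra.
  have := trunc_cvg (nbhs_metric_ball hD (l s) e2).
  move=> [[A B] /= [nA nB] AB].
  exists (fun s' => I01 s' -> A (l s') /\ D (l s) (l s') < e / 2).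
    have /subspace_continuousP hl' := hl.
    exact: (hl' s Is _ (filterI nA (nbhs_metric_ball hD (l s) e2))).
  exists B => // s' N ls' BN Is'; have [As' ds'] := ls' Is'.
  have := AB (l s', N) (conj As' BN) => /= ?.
  have := metric_triangle hD (l s') (l s) (trunc N (l s')).
  by rewrite (metricC hD (l s') (l s)); lra.
by move=> /filter_ex [N hN]; exists N.
Qed.

Lemma closed_commutator_loops_prod (d : forall n, X n -> X n -> R) m :
  (forall n, metrizes (d n)) -> is_loop x m ->
  (forall n : nat, closed_commutator_loops (d n) (x n) (proj n \o m)) ->
  closed_commutator_loops D x m.
Proof.
move=> hd hm ccl S sS cS comS.
have dfwith_x N : dfwith x N (x N) = x.
  by apply: functional_extensionality_dep => i; case: dfwithP.
have S_trunc N : S (trunc N \o m).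
  elim: N => [|N IH].
    have -> : trunc 0 \o m = cst x.
      by apply: funext => s; apply: functional_extensionality_dep.
    by case: sS.
  case: (sS) => _ hom _ Sconcat _.
  apply: (hom _ _ _ (loop_trunc N.+1 hm) (homotopic_trunc_succ N hm)).
  apply: Sconcat => //.
  exact: (closed_commutator_loops_comp (dfwith_continuous_prod (g := x) (i := N)) (hd N) hD
    (dfwith_x N) (ccl N)).
apply: (loop_closed_approx cS hm) => e e0; have e2 : 0 < e / 2 by lra.
have [N hN] := trunc_approx (let: And3 pm _ _ := hm in pm) e2.
exists (trunc N \o m); first by split; [exact: loop_trunc|exact: S_trunc].
suff : loop_dist D m (trunc N \o m) <= e / 2 by lra.
by apply: loop_dist_le => s Is; apply/ltW/hN.
Qed.

End Product.

Theorem theorem4p2 (X : nat -> topologicalType)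
    (d : forall n, X n -> X n -> R)
    (hpc : forall n, path_connected (X n))
    (hd : forall n, metrizes (d n))
    (D : prod_topology X -> prod_topology X -> R)
    (hD : metrizes D)
    (x : forall n, X n) :
  h_prod_iso d x D.
Proof.
exists (fun l n => proj n \o l); split.
- by move=> l hl n; exact: loop_proj.
- move=> l l' hl hl'; rewrite /h_eq; split => [ccl n|ccl].
  + rewrite -comp_concat.
    exact: (closed_commutator_loops_comp (proj_continuous_prod (i := n)) hD (hd n) _ ccl).
  + apply: (closed_commutator_loops_prod hD hd); first by apply: loop_concat => //; exact: loop_reverse.
    by move=> n; rewrite comp_concat; exact: ccl.
- move=> l l' hl hl' n; rewrite comp_concat.
  by apply: closed_commutator_loops_concat_reverse; apply: loop_concat; exact: loop_proj.
- move=> g hg; exists (fun s n => g n s).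
    split; first by apply: within_continuous_prod => n; case: (hg n).
      by apply: functional_extensionality_dep => n; case: (hg n).
    by apply: functional_extensionality_dep => n; case: (hg n).
  by move=> n; apply: closed_commutator_loops_concat_reverse; exact: hg.
Qed.
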